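(* Let $f\colon\mathbb{R}^n\to\mathbb{R}$ be continuous and suppose there is $\gamma>0$ such that (i) the set $S_\gamma=\{z\in\mathbb{R}^n : f(z)\le\inf f+\gamma\}$ is compact, and (ii) every $x\in S_\gamma$ with $0\in\partial f(x)$ is a global minimizer of $f$. Let $t\in(0,\infty)$ and let $x\in\mathbb{R}^n$ be a local minimizer of $u(\cdot,t)$. If $t\ge\|x-x^\star\|^2/(2\gamma)$ for some global minimizer $x^\star$ of $f$, then $x$ is a global minimizer of $f$.
   Context: $u(x,t)=\inf_{z\in\mathbb{R}^n}\big(f(z)+\frac{1}{2t}\|z-x\|^2\big)$. The subdifferential $\partial f(\bar x)$ is the set of all $v\in\mathbb{R}^n$ such that $f(x)\ge f(\bar x)+\langle v,x-\bar x\rangle+o(\|x-\bar x\|)$ as $x\to\bar x$. *)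

From HB Require Import structures.
From mathcomp Require Import all_boot all_order all_algebra.
From mathcomp Require Import all_classical all_reals all_analysis.
Set Implicit Arguments. Unset Strict Implicit. Unset Printing Implicit Defensive.
Import Order.TTheory GRing.Theory Num.Theory.
Import numFieldNormedType.Exports.
Local Open Scope classical_set_scope.
Local Open Scope ring_scope.

Definition dotv {R : realType} {n : nat} (x y : 'rV[R]_n) : R :=
  \sum_(i < n) x ord0 i * y ord0 i.
Definition enorm {R : realType} {n : nat} (x : 'rV[R]_n) : R :=
  Num.sqrt (dotv x x).

(* Moreau envelope u(x,t) = inf_z ( f z + ||z - x||^2 / (2t) ) *)
Definition moreau {R : realType} {n : nat} (f : 'rV[R]_n -> R)
  (x : 'rV[R]_n) (t : R) : R :=
  inf [set f z + (enorm (z - x)) ^+ 2 / (2 * t) | z in [set: 'rV[R]_n]].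

(* Frechet subdifferential: f y >= f xb + <v, y - xb> + o(||y - xb||) *)
Definition subdiff {R : realType} {n : nat} (f : 'rV[R]_n -> R)
  (xb : 'rV[R]_n) : set 'rV[R]_n :=
  [set v | forall eps : R, 0 < eps -> exists2 delta : R, 0 < delta &
     forall y, enorm (y - xb) < delta ->
       f xb + dotv v (y - xb) - eps * enorm (y - xb) <= f y].

Definition global_min {R : realType} {n : nat} (f : 'rV[R]_n -> R)
  (x : 'rV[R]_n) : Prop := forall y, f x <= f y.

Definition local_min {R : realType} {n : nat} (g : 'rV[R]_n -> R)
  (x : 'rV[R]_n) : Prop := \forall y \near x, g x <= g y.

(* S_gamma = { z | f z <= inf f + gamma }, with inf f the greatest lower bound
   of f, i.e. f z - gamma <= f y for every y. *)
Definition sublevel_gamma {R : realType} {n : nat} (f : 'rV[R]_n -> R)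
  (gamma : R) : set 'rV[R]_n :=
  [set z | forall y, f z <= f y + gamma].

From HB Require Import structures.
From mathcomp Require Import all_boot all_order all_algebra.
From mathcomp Require Import all_classical all_reals all_analysis.
From mathcomp Require Import ring lra.
Import Order.TTheory GRing.Theory Num.Theory.
Import numFieldNormedType.Exports.
Local Open Scope classical_set_scope.
Local Open Scope ring_scope.

(** At a local minimizer x of u(., t), every near-minimizer z of
    f + |. - x|^2/(2t) must lie close to x: otherwise a step of fixed length
    from x towards z would lower the envelope below u(x, t).  Together with the
    continuity of f this yields f x <= u(x, t), i.e. x is a fixed point of the
    proximal map.  Such a point is Frechet stationary, because
    f y >= f x - |y - x|^2/(2t), and it lies in S_gamma, because
    f x <= f x* + |x - x*|^2/(2t) <= inf f + gamma; hypothesis (ii) then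
    applies. *)

Section EuclideanNorm.
Context {R : realType} {n : nat}.
Implicit Types v w : 'rV[R]_n.

Lemma dotv_ge0 v : 0 <= dotv v v.
Proof. by apply: sumr_ge0 => i _; rewrite -expr2 sqr_ge0. Qed.

Lemma dotv0l v : dotv 0 v = 0.
Proof. by rewrite /dotv big1 // => i _; rewrite mxE mul0r. Qed.

Lemma enorm0 : enorm (0 : 'rV[R]_n) = 0.
Proof. by rewrite /enorm dotv0l sqrtr0. Qed.

Lemma enorm_ge0 v : 0 <= enorm v.
Proof. exact: sqrtr_ge0. Qed.

Lemma enormZ (s : R) v : enorm (s *: v) = `|s| * enorm v.
Proof.
have dotvZ : dotv (s *: v) (s *: v) = s ^+ 2 * dotv v v.
  by rewrite /dotv mulr_sumr; apply: eq_bigr => i _; rewrite !mxE; ring.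
by rewrite /enorm dotvZ sqrtrM ?sqr_ge0 // sqrtr_sqr.
Qed.

Lemma enormB v w : enorm (v - w) = enorm (w - v).
Proof. by rewrite -opprB -scaleN1r enormZ normrN normr1 mul1r. Qed.

Lemma enorm_entry_ge v i : `|v ord0 i| <= enorm v.
Proof.
rewrite -sqrtr_sqr /enorm ler_sqrt ?dotv_ge0 // /dotv (bigD1 i) //= -expr2.
by rewrite lerDl; apply: sumr_ge0 => j _; rewrite -expr2 sqr_ge0.
Qed.

Lemma mx_norm_le_enorm v : mx_norm v <= enorm v.
Proof.
have [->|] := eqVneq (mx_norm v) 0; first exact: enorm_ge0.
by move=> /mx_norm_neq0 [[i j] ->] /=; rewrite (ord1 i); apply: enorm_entry_ge.
Qed.

Lemma nbhs_enorm_ball {x : 'rV[R]_n} {P : 'rV[R]_n -> Prop} :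
  (\forall y \near x, P y) ->
  exists2 d : R, 0 < d & forall y, enorm (y - x) < d -> P y.
Proof.
move=> /nbhs_ballP [d /= d_gt0 Pd]; exists d => // y hy; apply: Pd.
rewrite mx_norm_ball /ball_ /= -opprB normrN.
exact: le_lt_trans (mx_norm_le_enorm _) hy.
Qed.

End EuclideanNorm.

Definition prox_fixed {R : realType} {n : nat} (f : 'rV[R]_n -> R) (t : R)
    (x : 'rV[R]_n) : Prop :=
  forall w, f x <= f w + enorm (w - x) ^+ 2 / (2 * t).

Section MoreauEnvelope.
Context {R : realType} {n : nat} {f : 'rV[R]_n -> R} {t : R}.
Hypotheses (t_gt0 : 0 < t) (f_lbounded : exists m, forall z, m <= f z).

Let twot_gt0 : 0 < 2 * t. Proof. by rewrite mulr_gt0. Qed.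

Lemma has_inf_moreau y :
  has_inf [set f z + enorm (z - y) ^+ 2 / (2 * t) | z in [set: 'rV[R]_n]].
Proof.
split; first by exists (f y + enorm (y - y) ^+ 2 / (2 * t)); exists y.
have [m fm] := f_lbounded; exists m => _ [z _ <-].
by rewrite -[m]addr0 lerD // divr_ge0 ?sqr_ge0 // ltW.
Qed.

Lemma moreau_le y z : moreau f y t <= f z + enorm (z - y) ^+ 2 / (2 * t).
Proof. by apply: (ge_inf (has_inf_moreau y).2); exists z. Qed.

Lemma moreau_approx y e : 0 < e ->
  exists z, f z + enorm (z - y) ^+ 2 / (2 * t) < moreau f y t + e.
Proof.
by move=> e_gt0; have [_ [z _ <-] ?] := inf_adherent e_gt0 (has_inf_moreau y); exists z.
Qed.

Lemma local_min_moreau_argmin_close {x z : 'rV[R]_n} {dl e : R} : 0 < dl ->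
  (forall y, enorm (y - x) < dl -> moreau f x t <= moreau f y t) ->
  e <= dl ^+ 2 / (4 * t) ->
  f z + enorm (z - x) ^+ 2 / (2 * t) < moreau f x t + e ->
  enorm (z - x) ^+ 2 / (2 * t) < e.
Proof.
move=> dl_gt0 xmin e_small zmin; set d := enorm (z - x) in zmin *.
have local_bound y : enorm (y - x) < dl -> d ^+ 2 < enorm (z - y) ^+ 2 + e * (2 * t).
  move=> hy; have := moreau_le y z; have := xmin y hy => h1 h2.
  have : d ^+ 2 / (2 * t) < enorm (z - y) ^+ 2 / (2 * t) + e by lra.
  by rewrite ltr_pdivrMr // mulrDl divfK ?gt_eqF.
have [d_lt|d_ge] := ltP d dl.
  by have := local_bound z d_lt; rewrite subrr enorm0 expr0n add0r ltr_pdivrMr.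
exfalso.
have d_gt0 : 0 < d by exact: lt_le_trans d_ge.
pose s := dl / (2 * d).
have s_ge0 : 0 <= s by rewrite divr_ge0 ?mulr_ge0 ?ltW.
have sd : s * d = dl / 2 by rewrite /s; field; rewrite gt_eqF.
have s_le1 : s <= 1 by rewrite /s ler_pdivrMr ?mulr_gt0 // mul1r; lra.
have := local_bound (x + s *: (z - x)).
rewrite addrAC subrr add0r enormZ ger0_norm // -/d sd.
have -> : z - (x + s *: (z - x)) = (1 - s) *: (z - x).
  by rewrite scalerBl scale1r opprD addrA.
rewrite enormZ ger0_norm ?subr_ge0 // -/d mulrBl mul1r sd.
have : e * (2 * t) <= dl ^+ 2 / 2.
  by move: e_small; rewrite ler_pdivlMr ?mulr_gt0 // => ?; lra.
nra.
Qed.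

Lemma local_min_moreau_prox_fixed x :
  {for x, continuous f} -> local_min (fun y => moreau f y t) x -> prox_fixed f t x.
Proof.
move=> fx xmin w; apply: le_trans (moreau_le x w).
have [dl dl_gt0 xmin_dl] := nbhs_enorm_ball xmin.
apply/ler_addgt0Pr => eta eta_gt0.
have eta2_gt0 : 0 < eta / 2 by rewrite divr_gt0.
have [rho rho_gt0 f_near] := nbhs_enorm_ball (cvgr_dist_lt _ _ fx _ eta2_gt0).
pose e := Num.min (eta / 2) (Num.min (dl ^+ 2 / (4 * t)) (rho ^+ 2 / (2 * t))).
have e_gt0 : 0 < e by rewrite !lt_min eta2_gt0 !divr_gt0 ?exprn_gt0 ?mulr_gt0.
have [z zmin] := moreau_approx x _ e_gt0.
have e_le : e <= dl ^+ 2 / (4 * t) /\ e <= rho ^+ 2 / (2 * t) /\ e <= eta / 2.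
  by rewrite !ge_min !lexx !orbT.
have z_close := local_min_moreau_argmin_close dl_gt0 xmin_dl e_le.1 zmin.
have z_rho : enorm (z - x) < rho.
  have : enorm (z - x) ^+ 2 < rho ^+ 2.
    rewrite -(ltr_pM2r (x := (2 * t)^-1)) ?invr_gt0 //.
    exact: lt_le_trans z_close e_le.2.1.
  by have := enorm_ge0 (z - x); nra.
have := f_near z z_rho; rewrite ltr_norml => /andP[_ fxz].
have : 0 <= enorm (z - x) ^+ 2 / (2 * t) by rewrite divr_ge0 ?sqr_ge0 ?ltW.
have := e_le.2.2; lra.
Qed.

End MoreauEnvelope.

Section ProxFixed.
Context {R : realType} {n : nat} {f : 'rV[R]_n -> R} {t : R} {x : 'rV[R]_n}.
Hypotheses (t_gt0 : 0 < t) (x_fixed : prox_fixed f t x).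

Lemma prox_fixed_subdiff0 : subdiff f x 0.
Proof.
move=> eps eps_gt0; exists (2 * t * eps); first by rewrite !mulr_gt0.
move=> y y_close; rewrite dotv0l addr0.
have : enorm (y - x) ^+ 2 / (2 * t) <= eps * enorm (y - x).
  by rewrite ler_pdivrMr ?mulr_gt0 //; have := enorm_ge0 (y - x); nra.
have := x_fixed y; lra.
Qed.

Lemma prox_fixed_sublevel gamma xstar : 0 < gamma -> global_min f xstar ->
  enorm (x - xstar) ^+ 2 / (2 * gamma) <= t -> sublevel_gamma f gamma x.
Proof.
move=> gamma_gt0 xstar_min t_large y; apply: le_trans (x_fixed xstar) _.
rewrite enormB; apply: lerD; first exact: xstar_min.
by move: t_large; rewrite !ler_pdivrMr ?mulr_gt0 // => ?; nra.
Qed.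

End ProxFixed.

Theorem lemma6 (R : realType) (n : nat) (f : 'rV[R]_n -> R) (gamma : R)
  (hf : continuous f) (hgamma : 0 < gamma)
  (hcomp : compact (sublevel_gamma f gamma))
  (hcrit : forall x, sublevel_gamma f gamma x -> subdiff f x 0 -> global_min f x)
  (t : R) (ht : 0 < t) (x : 'rV[R]_n)
  (hloc : local_min (fun y => moreau f y t) x)
  (xstar : 'rV[R]_n) (hxstar : global_min f xstar)
  (htx : (enorm (x - xstar)) ^+ 2 / (2 * gamma) <= t) :
  global_min f x.
Proof.
have f_lbounded : exists m, forall z, m <= f z by exists (f xstar).
have x_fixed := local_min_moreau_prox_fixed ht f_lbounded _ (hf x) hloc.
apply: hcrit; first exact: prox_fixed_sublevel ht x_fixed _ _ hgamma hxstar htx.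
exact: prox_fixed_subdiff0 ht x_fixed.
Qed.
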